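(* For all integers $0 \le p \le q$, $$F_{p,q}(x) \;=\; (1+x)^p \sum_{k=0}^{q} \binom{q}{k}\binom{p+k}{k} x^k.$$
   Context: Let $\mathbb{N} = \{0,1,2,\dots\}$. For $(p,q) \in \mathbb{N}^2$ and $n \in \mathbb{N}$, an unrestricted generalized jump path of length $n$ starting at $(p,q)$ is a sequence $(x_0, \dots, x_n)$ of points of $\mathbb{N}^2$ satisfying three conditions: - $x_0 = (p,q)$; - for every $i$, each coordinate of $x_{i+1}$ is at most the corresponding coordinate of $x_i$; - $x_{i+1} \ne x_i$ for every $i$. Let $u((p,q),n)$ denote the number of such paths. Define the polynomial $$F_{p,q}(x) = \sum_{k=0}^{p+q} u((p,q),k)\, x^k.$$ *)

From HB Require Import structures.
From mathcomp Require Import all_boot all_order all_algebra.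
Set Implicit Arguments. Unset Strict Implicit. Unset Printing Implicit Defensive.
Import GRing.Theory.

Definition is_jump_path (p q n : nat) (x : seq (nat * nat)) : bool :=
  [&& size x == n.+1,
      nth (0, 0) x 0 == (p, q) &
      all (fun i =>
             [&& (nth (0,0) x i.+1).1 <= (nth (0,0) x i).1,
                 (nth (0,0) x i.+1).2 <= (nth (0,0) x i).2 &
                 nth (0,0) x i.+1 != nth (0,0) x i]) (iota 0 n)].

(* Every point of such a path has coordinates bounded by (p,q), so paths are
   enumerated as tuples over 'I_p.+1 * 'I_q.+1, then read back in N^2. *)
Definition pts_of (p q n : nat) (t : n.+1.-tuple ('I_p.+1 * 'I_q.+1))
  : seq (nat * nat) := map (fun z => (val z.1, val z.2)) t.

Definition u (p q n : nat) : nat :=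
  #|[set t : n.+1.-tuple ('I_p.+1 * 'I_q.+1) | is_jump_path p q n (pts_of t)]|.

Definition F (p q : nat) : {poly int} :=
  \sum_(k < (p + q).+1) (u p q k)%:R *: 'X^k.

From HB Require Import structures.
From mathcomp Require Import all_boot all_order all_algebra.
From mathcomp Require Import ring zify.
Import GRing.Theory.

(* Deleting the first point of a path of length n+1 from
   (p,q) leaves a path of length n from a point (a,b) <= (p,q), (a,b) <> (p,q);
   hence u(p,q,n+1) = sum_{(a,b) < (p,q)} u(a,b,n), u(p,q,0) = 1, and
   u(p,q,n) = 0 for n > p+q (each step lowers a+b).  In generating-function
   form this reads  (1+x) F_{p,q} = 1 + x * sum_{i<=p, j<=q} F_{i,j}.

   Any family f_{p,q} of polynomials satisfying this "box equation"
   satisfies the finite-difference recurrence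
     f_{0,0} = 1,  f_{0,q+1} = (1+x) f_{0,q},  f_{p+1,0} = (1+x) f_{p,0},
     f_{p+1,q+1} = (1+x) (f_{p+1,q} + f_{p,q+1} - f_{p,q}),
   which determines f uniquely.  The right-hand side of the theorem satisfies
   the same recurrence by Pascal's rule, so both families agree for all p, q. *)

Lemma jump_path_cons p q n x a b s :
  is_jump_path p q n.+1 (x :: (a, b) :: s) =
  [&& x == (p, q), a <= p, b <= q, (a, b) != (p, q)
    & is_jump_path a b n ((a, b) :: s)].
Proof.
rewrite /is_jump_path /= (iotaDl 1 0) all_map /= !eqSS.
case: (x =P (p, q)) => [->|_]; last by rewrite andbF.
rewrite eqxx /=.
by case: (size s == n); case: (a <= p); case: (b <= q); case: ((a, b) != (p, q)).
Qed.

Lemma jump_path_bounded {p q n x} : is_jump_path p q n x ->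
  all (fun z => (z.1 <= p) && (z.2 <= q)) x.
Proof.
case/and3P=> /eqP size_x /eqP head_x /allP steps.
apply/(all_nthP (0, 0)) => k _.
elim: k => [|k IHk]; first by rewrite head_x /= !leqnn.
case: (ltnP k n) => [lt_kn|]; last by move=> le_nk; rewrite nth_default // size_x.
move: (steps k); rewrite mem_iota lt_kn => /(_ isT) /and3P[le1 le2 _].
by case/andP: IHk => le1' le2'; rewrite (leq_trans le1 le1') (leq_trans le2 le2').
Qed.

Definition point_of {p q} (z : 'I_p.+1 * 'I_q.+1) : nat * nat :=
  (val z.1, val z.2).

Lemma point_of_inj p q : injective (@point_of p q).
Proof. by move=> [a b] [c d] [/val_inj-> /val_inj->]. Qed.

Lemma card_jump_paths_in_box {p q i j} n : i <= p -> j <= q ->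
  #|[set t : n.+1.-tuple ('I_p.+1 * 'I_q.+1) | is_jump_path i j n (pts_of t)]|
  = u i j n.
Proof.
rewrite -ltnS -[j <= q]ltnS => le_ip le_jq.
pose w (z : 'I_i.+1 * 'I_j.+1) : 'I_p.+1 * 'I_q.+1 :=
  (widen_ord le_ip z.1, widen_ord le_jq z.2).
pose W (t : n.+1.-tuple ('I_i.+1 * 'I_j.+1)) := map_tuple w t.
have W_inj : injective W.
  move=> t1 t2 /(congr1 val) /= /inj_map eq_t; apply/val_inj/eq_t.
  by move=> [a b] [c d] [/val_inj-> /val_inj->].
have pts_W t : pts_of (W t) = pts_of t by rewrite /pts_of /= -map_comp.
rewrite /u -(card_imset _ W_inj); apply: eq_card => s; rewrite inE.
apply/idP/imsetP => [path_s|[t]]; last by rewrite inE => path_t ->; rewrite pts_W.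
have /allP in_box := jump_path_bounded path_s.
pose g (z : 'I_p.+1 * 'I_q.+1) : 'I_i.+1 * 'I_j.+1 := (inord z.1, inord z.2).
have gK z : z \in s -> w (g z) = z.
  move=> zs; have /andP[/= h1 h2] := in_box _ (map_f (@point_of p q) zs).
  by apply: point_of_inj; rewrite /point_of /= !inordK.
have gsK : W (map_tuple g s) = s.
  by apply: val_inj; rewrite /= -map_comp -[RHS]map_id; apply/eq_in_map => z /gK.
by exists (map_tuple g s); rewrite // inE -pts_W gsK.
Qed.

Lemma u_length0 p q : u p q 0 = 1.
Proof.
rewrite /u cardsE; apply: (@eq_card1 _ [tuple (ord_max, ord_max)]) => t.
case/tupleP: t => x t; rewrite [t]tuple0 !inE unfold_in /= andbT.
rewrite -[(p, q)]/(point_of (@ord_max p, @ord_max q)).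
rewrite (inj_eq (@point_of_inj _ _)).
by apply/eqP/eqP => [-> //|/(congr1 (@thead _ _))].
Qed.

Lemma u_first_step p q n : u p q n.+1 =
  \sum_(y : 'I_p.+1 * 'I_q.+1) (point_of y != (p, q)) * u y.1 y.2 n.
Proof.
pose top : 'I_p.+1 * 'I_q.+1 := (ord_max, ord_max).
have top_point : point_of top = (p, q) by [].
(* Every path starts at top, and is top followed by its tail. *)
rewrite {1}/u -sum1dep_card.
rewrite (partition_big (@thead _ _) (pred1 top)) => [|t]; last first.
  case/tupleP: t => x t; rewrite theadE /= => /and3P[_ /eqP h _].
  by apply/eqP/point_of_inj; exact: h.
pose cons_top (t : n.+1.-tuple ('I_p.+1 * 'I_q.+1)) := [tuple of top :: t].
rewrite big_pred1_eq (reindex cons_top) /=; last first.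
  exists (fun t : n.+2.-tuple _ => [tuple of behead t]) => [t _|t].
    exact: val_inj.
  by case/andP=> _ /eqP head_t; rewrite /cons_top -head_t -tuple_eta.
(* Expand each u(a,b,n) as a count of tails and compare tail by tail. *)
under [RHS]eq_bigr => y _ do
  rewrite -(card_jump_paths_in_box n (leq_ord y.1) (leq_ord y.2))
          -sum1dep_card big_distrr /= muln1 big_mkcond.
rewrite exchange_big big_mkcond; apply: eq_bigr => s _ /=.
rewrite theadE eqxx andbT; case/tupleP: s => y s.
set ys := map point_of s.
have -> : pts_of [tuple of top :: [tuple of y :: s]] =
          point_of top :: point_of y :: ys by [].
have -> : pts_of [tuple of y :: s] = point_of y :: ys by [].
rewrite top_point jump_path_cons eqxx !leq_ord /= (bigD1 y) //= big1 ?addn0.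
  by case: (_ != _); case: (is_jump_path _ _ _ _).
move=> z z_neq_y; case: ifP => // /and3P[_ /eqP /point_of_inj z_y _].
by rewrite z_y eqxx in z_neq_y.
Qed.

(* Each step strictly decreases a+b, so there are no paths longer than p+q. *)
Lemma u_long p q n : p + q < n -> u p q n = 0.
Proof.
elim: n p q => [//|n IHn] p q lt_pq_n.
rewrite u_first_step big1 // => -[[a lt_ap] [b lt_bq]] _ /=.
case: eqP => [//|ab_neq]; rewrite IHn ?muln0 //.
have : (a != p) || (b != q).
  rewrite -negb_and; apply: contra_notN ab_neq => /andP[/eqP eq_ap /eqP eq_bq].
  by rewrite /point_of /= eq_ap eq_bq.
by case/orP => /eqP; lia.
Qed.

(* Adding the trivial continuation at (p,q) itself to the first-step
   decomposition gives a sum over the whole box [0,p] x [0,q]. *)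
Lemma u_box_step p q n :
  u p q n.+1 + u p q n = \sum_(i < p.+1) \sum_(j < q.+1) u i j n.
Proof.
rewrite u_first_step pair_big /= [RHS](bigD1 (ord_max, ord_max)) //= addnC.
congr (_ + _); rewrite [RHS]big_mkcond; apply: eq_bigr => y _ /=.
by rewrite -(inj_eq (@point_of_inj _ _)); case: (_ != _); rewrite ?mul1n.
Qed.

Local Open Scope ring_scope.

Lemma coef_sum_scaleXn {R : nzSemiRingType} m (c : nat -> R) n :
  (\sum_(k < m) c k *: 'X^k)`_n = if (n < m)%N then c n else 0.
Proof. by rewrite -poly_def coef_poly. Qed.

Lemma coef_F p q n : (F p q)`_n = (u p q n)%:R.
Proof.
rewrite /F (coef_sum_scaleXn _ (fun k : nat => (u p q k)%:R)).
by case: ltnP => // le_pq_n; rewrite u_long.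
Qed.

Definition box_sum {V : nmodType} (f : nat -> nat -> V) p q : V :=
  \sum_(i < p.+1) \sum_(j < q.+1) f i j.

Lemma box_sum_Sl {V : nmodType} (f : nat -> nat -> V) p q :
  box_sum f p.+1 q = box_sum f p q + \sum_(j < q.+1) f p.+1 j.
Proof. by rewrite /box_sum big_ord_recr. Qed.

Lemma box_sum_0S {V : nmodType} (f : nat -> nat -> V) q :
  box_sum f 0 q.+1 = box_sum f 0 q + f 0 q.+1.
Proof. by rewrite /box_sum !big_ord1 big_ord_recr. Qed.

Lemma box_sum_SS {V : zmodType} (f : nat -> nat -> V) p q :
  box_sum f p.+1 q.+1 =
  box_sum f p.+1 q + box_sum f p q.+1 - box_sum f p q + f p.+1 q.+1.
Proof.
rewrite !box_sum_Sl big_ord_recr /=.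
by rewrite [box_sum f p q + _]addrC [X in _ = X + _]addrAC addrK addrCA addrA.
Qed.

Lemma F_box_equation p q : (1 + 'X) * F p q = 1 + 'X * box_sum F p q.
Proof.
apply/polyP => -[|n];
  rewrite mulrDl mul1r !coefD coefXM coef1 coefXM /=; rewrite !coef_F.
  by rewrite u_length0 addr0.
rewrite add0r -natrD u_box_step natr_sum /box_sum coef_sum.
apply: eq_bigr => i _; rewrite natr_sum coef_sum.
by under [RHS]eq_bigr do rewrite coef_F.
Qed.

Definition grid_recursive {R : comNzRingType} (f : nat -> nat -> {poly R}) :=
  [/\ f 0 0 = 1,
      forall q, f 0 q.+1 = (1 + 'X) * f 0 q,
      forall p, f p.+1 0 = (1 + 'X) * f p 0
    & forall p q, f p.+1 q.+1 = (1 + 'X) * (f p.+1 q + f p q.+1 - f p q)].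

Lemma grid_recursive_unique {R : comNzRingType} {f g : nat -> nat -> {poly R}} :
  grid_recursive f -> grid_recursive g -> forall p q, f p q = g p q.
Proof.
case=> f00 f0S fS0 fSS [g00 g0S gS0 gSS].
elim=> [|p IHp] q; elim: q => [|q IHq]; first by rewrite f00 g00.
- by rewrite f0S g0S IHq.
- by rewrite fS0 gS0 IHp.
- by rewrite fSS gSS IHq !IHp.
Qed.

Section BoxEquation.

Variables (R : comNzRingType) (f : nat -> nat -> {poly R}).

Hypothesis box_eq : forall p q, (1 + 'X) * f p q = 1 + 'X * box_sum f p q.

Let f_from_box p q : f p q = 1 + 'X * box_sum f p q - 'X * f p q.
Proof. by rewrite -box_eq; ring. Qed.

Lemma box_equation_grid_recursive : grid_recursive f.
Proof.
split=> [|q|p|p q].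
- by have := f_from_box 0 0; rewrite /box_sum !big_ord1 addrK.
- by rewrite f_from_box box_sum_0S box_eq; ring.
- by rewrite f_from_box box_sum_Sl big_ord1 box_eq; ring.
- by rewrite f_from_box box_sum_SS [in RHS]mulrBr [in RHS]mulrDr !box_eq; ring.
Qed.

End BoxEquation.

Definition binomial_poly {R : nzSemiRingType} p q : {poly R} :=
  \sum_(k < q.+1) ('C(q, k) * 'C(p + k, k))%:R *: 'X^k.

Lemma coef_binomial_poly {R : nzSemiRingType} p q n :
  (binomial_poly p q : {poly R})`_n = ('C(q, n) * 'C(p + n, n))%:R.
Proof.
rewrite (coef_sum_scaleXn _ (fun k : nat => ('C(q, k) * 'C(p + k, k))%:R)).
by case: ltnP => // lt_qn; rewrite bin_small.
Qed.

Lemma binomial_poly_q0 {R : nzSemiRingType} p :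
  binomial_poly p 0 = 1 :> {poly R}.
Proof. by rewrite /binomial_poly big_ord1 bin0 addn0 bin0 scale1r. Qed.

Lemma binomial_poly_0q {R : nzSemiRingType} q :
  binomial_poly 0 q = (1 + 'X) ^+ q :> {poly R}.
Proof.
rewrite addrC exprD1n; apply: eq_bigr => k _.
by rewrite add0n binn muln1 scaler_nat.
Qed.

(* Pascal's rule C(n+1,k+1) = C(n,k+1) + C(n,k), applied to both binomials. *)
Lemma binomial_poly_pascal {R : comNzRingType} p q :
  binomial_poly p.+1 q.+1 =
  (1 + 'X) * binomial_poly p.+1 q + binomial_poly p q.+1 - binomial_poly p q
  :> {poly R}.
Proof.
apply/polyP => -[|n]; rewrite !coefB !coefD mulrDl mul1r coefD coefXM;
  rewrite !coef_binomial_poly /=.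
  by rewrite !bin0 !muln1 addr0 addrK.
by rewrite !addnS !addSn !binS !(natrD, natrM); ring.
Qed.

Lemma closed_form_grid_recursive (R : comNzRingType) :
  grid_recursive (fun p q => (1 + 'X) ^+ p * binomial_poly p q : {poly R}).
Proof.
split=> [|q|p|p q].
- by rewrite expr0 mul1r binomial_poly_q0.
- by rewrite expr0 !mul1r !binomial_poly_0q exprS.
- by rewrite !binomial_poly_q0 !mulr1 exprS.
- by rewrite binomial_poly_pascal !exprS; ring.
Qed.

(* Theorem 3.1; the identity in fact holds for all p and q. *)
Theorem theorem3p1 (p q : nat) (hpq : (p <= q)%N) :
  F p q = (1 + 'X) ^+ p *
          \sum_(k < q.+1) ('C(q, k) * 'C(p + k, k))%:R *: 'X^k.
Proof.
have F_rec : grid_recursive F := box_equation_grid_recursive _ _ F_box_equation.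
exact: (grid_recursive_unique F_rec (closed_form_grid_recursive _) p q).
Qed.
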